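(* Let $\gamma_1,\gamma_2:[a,b]\to\mathrm{Sp}(H)$ be two positive paths. Then the pointwise product $\gamma(t):=\gamma_1(t)\gamma_2(t)$, $t\in[a,b]$, is a positive path.
   Context: $(H,\langle\cdot,\cdot\rangle)$ is a complex Hilbert space and $J\in\mathcal B(H)$ is a bounded injective operator with $J^*=-J$; $\omega(x,y):=\langle Jx,y\rangle$. $\mathrm{Sp}(H):=\{M\in\mathrm{GL}(H): M^*JM=J\}$ (bounded invertible $M$). A $C^1$ path $\gamma$ in $\mathrm{Sp}(H)$ defined on an interval is called positive if $\dot\gamma(t)\gamma(t)^{-1}\in K$ for every $t$, where $K:=\{A\in\mathcal B(H): -JA=A^*J \text{ and } -JA \text{ is positive definite}\}$. *)

From Stdlib Require Import Reals.
Open Scope R_scope.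

Definition C : Type := (R * R)%type.
Definition Cre (z : C) : R := fst z.
Definition Cim (z : C) : R := snd z.
Definition C0 : C := (0, 0).
Definition C1 : C := (1, 0).
Definition RtoC (r : R) : C := (r, 0).
Definition Cadd (z w : C) : C := (fst z + fst w, snd z + snd w).
Definition Cmul (z w : C) : C :=
  (fst z * fst w - snd z * snd w, fst z * snd w + snd z * fst w).
Definition Cconj (z : C) : C := (fst z, - snd z).

(* ---------- Complex Hilbert spaces ----------
   inner product linear in the first argument, conjugate-linear in the second. *)
Record ComplexHilbertSpace := {
  hcar :> Type;
  vzero : hcar;
  vadd : hcar -> hcar -> hcar;
  vopp : hcar -> hcar;
  vscal : C -> hcar -> hcar;
  inner : hcar -> hcar -> C;
  vadd_assoc : forall x y z, vadd x (vadd y z) = vadd (vadd x y) z;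
  vadd_comm : forall x y, vadd x y = vadd y x;
  vadd_zero : forall x, vadd x vzero = x;
  vadd_opp : forall x, vadd x (vopp x) = vzero;
  vscal_one : forall x, vscal C1 x = x;
  vscal_assoc : forall c d x, vscal c (vscal d x) = vscal (Cmul c d) x;
  vscal_addv : forall c x y, vscal c (vadd x y) = vadd (vscal c x) (vscal c y);
  vscal_adds : forall c d x, vscal (Cadd c d) x = vadd (vscal c x) (vscal d x);
  inner_add : forall x y z, inner (vadd x y) z = Cadd (inner x z) (inner y z);
  inner_scal : forall c x y, inner (vscal c x) y = Cmul c (inner x y);
  inner_conj : forall x y, inner y x = Cconj (inner x y);
  inner_pos : forall x, 0 <= Cre (inner x x);
  inner_def : forall x, inner x x = C0 -> x = vzero;
  hcomplete : forall u : nat -> hcar,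
    (forall eps, 0 < eps -> exists N, forall m n, (N <= m)%nat -> (N <= n)%nat ->
        sqrt (Cre (inner (vadd (u m) (vopp (u n))) (vadd (u m) (vopp (u n))))) < eps) ->
    exists l, forall eps, 0 < eps -> exists N, forall n, (N <= n)%nat ->
        sqrt (Cre (inner (vadd (u n) (vopp l)) (vadd (u n) (vopp l)))) < eps
}.

Section Ops.
Variable H : ComplexHilbertSpace.

Definition vsub (x y : H) : H := vadd H x (vopp H y).
Definition hnorm (x : H) : R := sqrt (Cre (inner H x x)).

Definition bounded_op (T : H -> H) : Prop :=
  (forall x y, T (vadd H x y) = vadd H (T x) (T y)) /\
  (forall c x, T (vscal H c x) = vscal H c (T x)) /\
  (exists k, forall x, hnorm (T x) <= k * hnorm x).

Definition is_inverse (M Minv : H -> H) : Prop :=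
  bounded_op Minv /\ (forall x, Minv (M x) = x) /\ (forall x, M (Minv x) = x).

Definition invertible_op (M : H -> H) : Prop :=
  bounded_op M /\ exists Minv, is_inverse M Minv.

(* J^* = -J, i.e. <x, J y> = <-J x, y> for all x y *)
Definition skew_adjoint (J : H -> H) : Prop :=
  forall x y, inner H x (J y) = inner H (vopp H (J x)) y.

(* Sp(H) = { M in GL(H) : M^* J M = J },  i.e. <J M x, M y> = <J x, y> *)
Definition in_Sp (J M : H -> H) : Prop :=
  invertible_op M /\ forall x y, inner H (J (M x)) (M y) = inner H (J x) y.

(* K = { A in B(H) : -JA = A^* J and -JA positive definite }.
   -JA = A^*J  unfolds to  <-J A x, y> = <J x, A y>  for all x y.
   positive definite: <-J A x, x> is real and > 0 for x <> 0. *)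
Definition in_K (J A : H -> H) : Prop :=
  bounded_op A /\
  (forall x y, inner H (vopp H (J (A x))) y = inner H (J x) (A y)) /\
  (forall x, x <> vzero H ->
     Cim (inner H (vopp H (J (A x))) x) = 0 /\
     0 < Cre (inner H (vopp H (J (A x))) x)).

(* D is the derivative of gamma on [a,b] in operator norm (one-sided at ends) *)
Definition op_deriv_on (a b : R) (gamma D : R -> H -> H) : Prop :=
  forall t, a <= t <= b -> forall eps, 0 < eps -> exists delta, 0 < delta /\
    forall h, h <> 0 -> Rabs h < delta -> a <= t + h <= b ->
      forall x, hnorm (vsub (vscal H (RtoC (/ h)) (vsub (gamma (t + h) x) (gamma t x)))
                            (D t x)) <= eps * hnorm x.

Definition op_continuous_on (a b : R) (D : R -> H -> H) : Prop :=
  forall t, a <= t <= b -> forall eps, 0 < eps -> exists delta, 0 < delta /\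
    forall s, a <= s <= b -> Rabs (s - t) < delta ->
      forall x, hnorm (vsub (D s x) (D t x)) <= eps * hnorm x.

Definition C1_Sp_path (J : H -> H) (a b : R) (gamma D : R -> H -> H) : Prop :=
  (forall t, a <= t <= b -> in_Sp J (gamma t)) /\
  (forall t, a <= t <= b -> bounded_op (D t)) /\
  op_deriv_on a b gamma D /\ op_continuous_on a b D.

Definition positive_path (J : H -> H) (a b : R) (gamma : R -> H -> H) : Prop :=
  exists D, C1_Sp_path J a b gamma D /\
    forall t, a <= t <= b -> forall Ginv, is_inverse (gamma t) Ginv ->
      in_K J (fun x => D t (Ginv x)).

End Ops.

(** By the product rule in operator norm, [g1 g2] is C^1 with
      (g1 g2)' (g1 g2)^-1 = g1' g1^-1 + g1 (g2' g2^-1) g1^-1.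
    The cone K is closed under addition and under conjugation A |-> M A M^-1 by any
    M in Sp(H), since <-J M A M^-1 x, y> = <-J A M^-1 x, M^-1 y>; so the right-hand
    side lies in K. *)

From Pilot Require Import Defs.
From Stdlib Require Import Reals Lra Psatz FunctionalExtensionality.
Open Scope R_scope.

Lemma quadratic_nonneg_discriminant (A B C : R) :
  0 <= C -> (forall t, 0 <= A + 2 * t * B + t * t * C) -> B * B <= A * C.
Proof.
  intros HC Q. destruct (Rle_lt_or_eq_dec 0 C HC) as [Cpos | <-].
  - specialize (Q (- B / C)).
    replace (A + 2 * (- B / C) * B + - B / C * (- B / C) * C)
      with ((A * C - B * B) / C) in Q by (field; lra).
    assert (P : 0 <= (A * C - B * B) / C * C) by (apply Rmult_le_pos; lra).
    replace ((A * C - B * B) / C * C) with (A * C - B * B) in P by (field; lra).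
    lra.
  - destruct (Req_dec B 0) as [-> | Bnz]; [lra |].
    specialize (Q (- (A + 1) / (2 * B))).
    replace (A + 2 * (- (A + 1) / (2 * B)) * B + - (A + 1) / (2 * B) * (- (A + 1) / (2 * B)) * 0)
      with (-1) in Q by (field; auto).
    lra.
Qed.

Lemma small_factor (c eps : R) : 0 <= c -> 0 < eps ->
  exists eta, 0 < eta <= 1 /\ eta * c <= eps.
Proof.
  intros Hc Heps. exists (Rmin 1 (eps / (c + 1))).
  assert (Hq : 0 < eps / (c + 1)) by (apply Rdiv_lt_0_compat; lra).
  split; [split; [apply Rmin_pos; lra | apply Rmin_l] |].
  apply Rle_trans with (eps / (c + 1) * (c + 1)).
  - pose proof (Rmin_r 1 (eps / (c + 1))). pose proof (Rmin_pos 1 _ Rlt_0_1 Hq). nra.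
  - right; field; lra.
Qed.

Section Hilbert.
Variable H : ComplexHilbertSpace.
Local Notation add := (vadd H).
Local Notation opp := (vopp H).
Local Notation scal := (vscal H).
Local Notation zero := (vzero H).
Local Notation inn := (inner H).
Local Notation sub := (vsub H).
Local Notation nm := (hnorm H).

Lemma vadd_0_l x : add zero x = x.
Proof. rewrite vadd_comm; apply vadd_zero. Qed.

Lemma vadd_reg_l x y z : add x y = add x z -> y = z.
Proof.
  intro E. rewrite <- (vadd_0_l y), <- (vadd_0_l z), <- (vadd_opp H x).
  rewrite (vadd_comm H x (opp x)), <- !vadd_assoc, E. reflexivity.
Qed.

Lemma vopp_unique x y : add x y = zero -> y = opp x.
Proof. intro E. apply (vadd_reg_l x). rewrite E, vadd_opp. reflexivity. Qed.

Lemma vopp_vadd x y : opp (add x y) = add (opp x) (opp y).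
Proof.
  symmetry; apply vopp_unique.
  rewrite (vadd_comm H x y), <- vadd_assoc, (vadd_assoc H x), vadd_opp, vadd_0_l, vadd_opp.
  reflexivity.
Qed.

Lemma vscal_C0 x : scal C0 x = zero.
Proof.
  apply (vadd_reg_l (scal C0 x)). rewrite vadd_zero, <- vscal_adds.
  f_equal. unfold Cadd, C0; simpl; f_equal; ring.
Qed.

Lemma vscal_m1 x : scal (RtoC (-1)) x = opp x.
Proof.
  apply vopp_unique. rewrite <- (vscal_C0 x), <- (vscal_one H x) at 1.
  rewrite <- vscal_adds. f_equal. unfold Cadd, Defs.C1, RtoC, C0; simpl; f_equal; ring.
Qed.

Lemma vscal_vzero c : scal c zero = zero.
Proof.
  rewrite <- (vscal_C0 zero), vscal_assoc. f_equal.
  destruct c; unfold Cmul, C0; simpl; f_equal; ring.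
Qed.

Lemma vscal_vopp c x : scal c (opp x) = opp (scal c x).
Proof. apply vopp_unique. rewrite <- vscal_addv, vadd_opp. apply vscal_vzero. Qed.

Lemma vsub_diag x : sub x x = zero.
Proof. apply vadd_opp. Qed.

Lemma vsub_vadd_vsub x y z : add (sub x y) (sub y z) = sub x z.
Proof.
  unfold vsub. rewrite <- vadd_assoc, (vadd_assoc H (opp y)), (vadd_comm H (opp y) y),
    vadd_opp, vadd_0_l. reflexivity.
Qed.

Lemma vsub_vadd x y z w : sub (add x y) (add z w) = add (sub x z) (sub y w).
Proof.
  unfold vsub. rewrite vopp_vadd, <- !vadd_assoc. f_equal.
  rewrite !vadd_assoc. f_equal. apply vadd_comm.
Qed.

Lemma vsubK x y : add (sub x y) y = x.
Proof.
  unfold vsub. rewrite <- vadd_assoc, (vadd_comm H (opp y)), vadd_opp, vadd_zero.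
  reflexivity.
Qed.

Section BoundedOp.
Variable T : H -> H.
Hypothesis HT : bounded_op H T.

Lemma bounded_op_vadd x y : T (add x y) = add (T x) (T y).
Proof. apply HT. Qed.

Lemma bounded_op_vscal c x : T (scal c x) = scal c (T x).
Proof. apply HT. Qed.

Lemma bounded_op_vzero : T zero = zero.
Proof.
  apply (vadd_reg_l (T zero)). rewrite vadd_zero, <- bounded_op_vadd, vadd_zero.
  reflexivity.
Qed.

Lemma bounded_op_vopp x : T (opp x) = opp (T x).
Proof. apply vopp_unique. rewrite <- bounded_op_vadd, vadd_opp. apply bounded_op_vzero. Qed.

Lemma bounded_op_vsub x y : T (sub x y) = sub (T x) (T y).
Proof. unfold vsub. rewrite bounded_op_vadd, bounded_op_vopp. reflexivity. Qed.

End BoundedOp.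

Lemma inner_add_r x y z : inn x (add y z) = Cadd (inn x y) (inn x z).
Proof.
  rewrite (inner_conj H (add y z) x), inner_add, (inner_conj H y x), (inner_conj H z x).
  unfold Cadd, Cconj; simpl; f_equal; ring.
Qed.

Lemma inner_opp_l x y : inn (opp x) y = Cmul (RtoC (-1)) (inn x y).
Proof. rewrite <- vscal_m1, inner_scal. reflexivity. Qed.

Definition rinner x y := Cre (inn x y).

Lemma rinner_add_l x y z : rinner (add x y) z = rinner x z + rinner y z.
Proof. unfold rinner. rewrite inner_add. reflexivity. Qed.

Lemma rinner_add_r x y z : rinner x (add y z) = rinner x y + rinner x z.
Proof. unfold rinner. rewrite inner_add_r. reflexivity. Qed.

Lemma rinner_sym x y : rinner y x = rinner x y.
Proof. unfold rinner. rewrite inner_conj. reflexivity. Qed.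

Lemma rinner_scal_l r x y : rinner (scal (RtoC r) x) y = r * rinner x y.
Proof. unfold rinner. rewrite inner_scal. unfold Cmul, RtoC, Cre; simpl. ring. Qed.

Lemma rinner_scal_r r x y : rinner x (scal (RtoC r) y) = r * rinner x y.
Proof. rewrite rinner_sym, rinner_scal_l, rinner_sym. reflexivity. Qed.

Lemma rinner_self_ge0 x : 0 <= rinner x x.
Proof. apply inner_pos. Qed.

Lemma hnorm_ge0 x : 0 <= nm x.
Proof. apply sqrt_pos. Qed.

Lemma hnorm_sqr x : nm x * nm x = rinner x x.
Proof. apply sqrt_sqrt, rinner_self_ge0. Qed.

Lemma cauchy_schwarz x y : rinner x y <= nm x * nm y.
Proof.
  assert (D : rinner x y * rinner x y <= rinner x x * rinner y y).
  { apply quadratic_nonneg_discriminant; [apply rinner_self_ge0 |]. intro t.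
    pose proof (rinner_self_ge0 (add x (scal (RtoC t) y))) as P.
    rewrite !rinner_add_l, !rinner_add_r, !rinner_scal_l, !rinner_scal_r, (rinner_sym x y) in P.
    nra. }
  unfold hnorm; fold (rinner x x) (rinner y y).
  rewrite <- sqrt_mult by apply rinner_self_ge0.
  destruct (Rle_or_lt (rinner x y) 0). { pose proof (sqrt_pos (rinner x x * rinner y y)); lra. }
  rewrite <- (sqrt_square (rinner x y)) by lra. apply sqrt_le_1_alt. exact D.
Qed.

Lemma hnorm_triangle x y : nm (add x y) <= nm x + nm y.
Proof.
  pose proof (hnorm_ge0 x); pose proof (hnorm_ge0 y).
  unfold hnorm at 1. rewrite <- (sqrt_square (nm x + nm y)) by lra.
  apply sqrt_le_1_alt. fold (rinner (add x y) (add x y)).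
  rewrite rinner_add_l, !rinner_add_r, (rinner_sym x y), <- (hnorm_sqr x), <- (hnorm_sqr y).
  pose proof (cauchy_schwarz x y). nra.
Qed.

Lemma hnorm_scal r x : nm (scal (RtoC r) x) = Rabs r * nm x.
Proof.
  unfold hnorm. fold (rinner (scal (RtoC r) x) (scal (RtoC r) x)) (rinner x x).
  rewrite rinner_scal_l, rinner_scal_r, <- Rmult_assoc, sqrt_mult_alt by apply Rle_0_sqr.
  rewrite <- sqrt_Rsqr_abs. reflexivity.
Qed.

Lemma hnorm_vzero : nm zero = 0.
Proof. rewrite <- (vscal_C0 zero). change C0 with (RtoC 0). rewrite hnorm_scal, Rabs_R0. ring. Qed.

Lemma hnorm_vsub_triangle x y z : nm (sub x z) <= nm (sub x y) + nm (sub y z).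
Proof. rewrite <- (vsub_vadd_vsub x y z). apply hnorm_triangle. Qed.

Lemma hnorm_le_vsub x y : nm x <= nm (sub x y) + nm y.
Proof. rewrite <- (vsubK x y) at 1. apply hnorm_triangle. Qed.

Definition op_bound (T : H -> H) (k : R) : Prop := forall x, nm (T x) <= k * nm x.

Definition op_dist (A B : H -> H) (e : R) : Prop := forall x, nm (sub (A x) (B x)) <= e * nm x.

Lemma bounded_op_bound T : bounded_op H T -> exists k, 0 <= k /\ op_bound T k.
Proof.
  intros [_ [_ [k Hk]]]. exists (Rabs k). split; [apply Rabs_pos |].
  intro x. eapply Rle_trans; [apply Hk |].
  apply Rmult_le_compat_r; [apply hnorm_ge0 | apply Rle_abs].
Qed.

Lemma bounded_op_sum T S : bounded_op H T -> bounded_op H S ->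
  bounded_op H (fun x => add (T x) (S x)).
Proof.
  intros HT HS. split; [| split].
  - intros x y. rewrite (bounded_op_vadd _ HT), (bounded_op_vadd _ HS), <- !vadd_assoc.
    f_equal. rewrite !vadd_assoc. f_equal. apply vadd_comm.
  - intros c x. rewrite (bounded_op_vscal _ HT), (bounded_op_vscal _ HS), vscal_addv.
    reflexivity.
  - destruct (bounded_op_bound _ HT) as [k1 [_ H1]].
    destruct (bounded_op_bound _ HS) as [k2 [_ H2]].
    exists (k1 + k2). intro x. eapply Rle_trans; [apply hnorm_triangle |].
    specialize (H1 x); specialize (H2 x); lra.
Qed.

Lemma bounded_op_comp T S : bounded_op H T -> bounded_op H S ->
  bounded_op H (fun x => T (S x)).
Proof.
  intros HT HS. split; [| split].
  - intros x y. rewrite (bounded_op_vadd _ HS), (bounded_op_vadd _ HT). reflexivity.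
  - intros c x. rewrite (bounded_op_vscal _ HS), (bounded_op_vscal _ HT). reflexivity.
  - destruct (bounded_op_bound _ HT) as [k1 [k1_ge0 H1]].
    destruct (bounded_op_bound _ HS) as [k2 [_ H2]].
    exists (k1 * k2). intro x. eapply Rle_trans; [apply H1 |].
    rewrite Rmult_assoc. apply Rmult_le_compat_l; auto.
Qed.

Lemma op_dist_refl A : op_dist A A 0.
Proof. intro x. rewrite vsub_diag, hnorm_vzero, Rmult_0_l. apply Rle_refl. Qed.

Lemma op_dist_weaken A B e e' : e <= e' -> op_dist A B e -> op_dist A B e'.
Proof.
  intros He HAB x. eapply Rle_trans; [apply HAB |].
  apply Rmult_le_compat_r; [apply hnorm_ge0 | exact He].
Qed.

Lemma op_dist_trans A B C e e' : op_dist A B e -> op_dist B C e' -> op_dist A C (e + e').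
Proof.
  intros HAB HBC x. eapply Rle_trans; [apply (hnorm_vsub_triangle _ (B x)) |].
  specialize (HAB x); specialize (HBC x); lra.
Qed.

Lemma op_dist_sum A A' B B' e e' : op_dist A A' e -> op_dist B B' e' ->
  op_dist (fun x => add (A x) (B x)) (fun x => add (A' x) (B' x)) (e + e').
Proof.
  intros HA HB x. rewrite vsub_vadd. eapply Rle_trans; [apply hnorm_triangle |].
  specialize (HA x); specialize (HB x); lra.
Qed.

Lemma op_bound_of_dist A B e k : op_dist A B e -> op_bound B k -> op_bound A (k + e).
Proof.
  intros HAB HB x. eapply Rle_trans; [apply (hnorm_le_vsub _ (B x)) |].
  specialize (HAB x); specialize (HB x); lra.
Qed.

Lemma op_dist_comp_r A A' B e k : 0 <= e -> op_dist A A' e -> op_bound B k ->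
  op_dist (fun x => A (B x)) (fun x => A' (B x)) (e * k).
Proof.
  intros He HA HB x. eapply Rle_trans; [apply HA |].
  rewrite Rmult_assoc. apply Rmult_le_compat_l; auto.
Qed.

Lemma op_dist_comp_l A B B' k e : bounded_op H A -> 0 <= k -> op_bound A k ->
  op_dist B B' e -> op_dist (fun x => A (B x)) (fun x => A (B' x)) (k * e).
Proof.
  intros HA Hk HAk HB x. rewrite <- (bounded_op_vsub _ HA). eapply Rle_trans; [apply HAk |].
  rewrite Rmult_assoc. apply Rmult_le_compat_l; auto.
Qed.

Lemma op_dist_comp A A' B B' ea eb ka kb :
  bounded_op H A' -> 0 <= ka -> op_bound A' ka -> op_bound B' kb ->
  0 <= ea -> op_dist A A' ea -> op_dist B B' eb ->
  op_dist (fun x => A (B x)) (fun x => A' (B' x)) (ea * (kb + eb) + ka * eb).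
Proof.
  intros HA' Hka HA'k HB'k Hea HA HB.
  apply (op_dist_trans _ (fun x => A' (B x))).
  - apply op_dist_comp_r; [exact Hea | exact HA |]. apply (op_bound_of_dist _ B'); assumption.
  - apply op_dist_comp_l; assumption.
Qed.

Section Paths.
Variables a b : R.

Definition diff_quot (g : R -> H -> H) (t h : R) (x : H) : H :=
  scal (RtoC (/ h)) (sub (g (t + h) x) (g t x)).

Definition op_continuous_at (g : R -> H -> H) (t : R) : Prop :=
  forall eps, 0 < eps -> exists delta, 0 < delta /\
    forall s, a <= s <= b -> Rabs (s - t) < delta -> op_dist (g s) (g t) eps.

Lemma diff_quot_scal g t h x : h <> 0 ->
  scal (RtoC h) (diff_quot g t h x) = sub (g (t + h) x) (g t x).
Proof.
  intro Hh. unfold diff_quot. rewrite vscal_assoc.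
  replace (Cmul (RtoC h) (RtoC (/ h))) with Defs.C1
    by (unfold Cmul, RtoC, Defs.C1; simpl; f_equal; field; exact Hh).
  apply vscal_one.
Qed.

Lemma diff_quot_comp (g1 g2 : R -> H -> H) t h x : bounded_op H (g1 t) ->
  diff_quot (fun t x => g1 t (g2 t x)) t h x =
  add (diff_quot g1 t h (g2 (t + h) x)) (g1 t (diff_quot g2 t h x)).
Proof.
  intro B1. unfold diff_quot.
  rewrite <- (vsub_vadd_vsub _ (g1 t (g2 (t + h) x))), vscal_addv,
    <- (bounded_op_vsub _ B1), <- (bounded_op_vscal _ B1).
  reflexivity.
Qed.

Lemma op_deriv_continuous g D t : op_deriv_on H a b g D -> a <= t <= b ->
  bounded_op H (D t) -> op_continuous_at g t.
Proof.
  intros Dg Ht BD eta Heta.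
  destruct (bounded_op_bound _ BD) as [k [Hk HDk]].
  destruct (Dg t Ht 1 Rlt_0_1) as [d [Hd Q]].
  exists (Rmin d (eta / (k + 1))).
  split; [apply Rmin_pos; [exact Hd | apply Rdiv_lt_0_compat; lra] |].
  intros s Hs Hst x.
  destruct (Req_dec s t) as [-> | Hne].
  { apply (op_dist_weaken _ _ 0); [lra | apply op_dist_refl]. }
  apply Rmin_Rgt in Hst as [Hsd Hse].
  pose (h := s - t). fold h in Hsd, Hse.
  assert (Hh0 : h <> 0) by (unfold h; lra).
  assert (Es : s = t + h) by (unfold h; ring). rewrite Es in Hs |- *.
  assert (Bq : op_bound (diff_quot g t h) (k + 1)).
  { apply (op_bound_of_dist _ (D t)); [exact (Q h Hh0 Hsd Hs) | exact HDk]. }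
  assert (Hhk : Rabs h * (k + 1) <= eta).
  { apply Rmult_lt_compat_r with (r := k + 1) in Hse; [| lra].
    replace (eta / (k + 1) * (k + 1)) with eta in Hse by (field; lra). lra. }
  rewrite <- (diff_quot_scal _ _ _ _ Hh0), hnorm_scal.
  pose proof (Bq x). pose proof (Rabs_pos h). pose proof (hnorm_ge0 x). nra.
Qed.

Section Product.
Variables g1 g2 D1 D2 : R -> H -> H.
Hypothesis Dg1 : op_deriv_on H a b g1 D1.
Hypothesis Dg2 : op_deriv_on H a b g2 D2.
Hypothesis Bg1 : forall t, a <= t <= b -> bounded_op H (g1 t).
Hypothesis Bg2 : forall t, a <= t <= b -> bounded_op H (g2 t).
Hypothesis BD1 : forall t, a <= t <= b -> bounded_op H (D1 t).
Hypothesis BD2 : forall t, a <= t <= b -> bounded_op H (D2 t).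

Lemma op_deriv_comp : op_deriv_on H a b (fun t x => g1 t (g2 t x))
  (fun t x => add (D1 t (g2 t x)) (g1 t (D2 t x))).
Proof.
  intros t Ht eps Heps.
  destruct (bounded_op_bound _ (Bg1 t Ht)) as [k1 [Hk1 B1]].
  destruct (bounded_op_bound _ (Bg2 t Ht)) as [k2 [Hk2 B2]].
  destruct (bounded_op_bound _ (BD1 t Ht)) as [kd1 [Hkd1 BD1t]].
  destruct (small_factor (k2 + 1 + kd1 + k1) eps) as [eta [[Heta Heta1] Hsmall]]; [lra | lra |].
  destruct (Dg1 t Ht eta Heta) as [d1 [Hd1 Q1]].
  destruct (Dg2 t Ht eta Heta) as [d2 [Hd2 Q2]].
  destruct (op_deriv_continuous g2 D2 t Dg2 Ht (BD2 t Ht) eta Heta) as [d3 [Hd3 C2]].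
  exists (Rmin d1 (Rmin d2 d3)). split; [repeat apply Rmin_pos; assumption |].
  intros h Hh0 Hh Hth.
  apply Rmin_Rgt in Hh as [Hh1 Hh]. apply Rmin_Rgt in Hh as [Hh2 Hh3].
  assert (Hth3 : Rabs (t + h - t) < d3) by (replace (t + h - t) with h by ring; exact Hh3).
  change (op_dist (diff_quot (fun t x => g1 t (g2 t x)) t h)
            (fun x => add (D1 t (g2 t x)) (g1 t (D2 t x))) eps).
  intro x. rewrite (diff_quot_comp _ _ _ _ _ (Bg1 t Ht)). revert x.
  eapply op_dist_weaken.
  2: { apply op_dist_sum.
       - exact (op_dist_comp _ _ _ _ eta eta kd1 k2 (BD1 t Ht) Hkd1 BD1t B2
                  (Rlt_le _ _ Heta) (Q1 h Hh0 Hh1 Hth) (C2 (t + h) Hth Hth3)).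
       - exact (op_dist_comp_l _ _ _ _ _ (Bg1 t Ht) Hk1 B1 (Q2 h Hh0 Hh2 Hth)). }
  nra.
Qed.

Lemma op_continuous_deriv_comp : op_continuous_on H a b D1 -> op_continuous_on H a b D2 ->
  op_continuous_on H a b (fun t x => add (D1 t (g2 t x)) (g1 t (D2 t x))).
Proof.
  intros C1 C2 t Ht eps Heps.
  destruct (bounded_op_bound _ (Bg1 t Ht)) as [k1 [Hk1 B1]].
  destruct (bounded_op_bound _ (Bg2 t Ht)) as [k2 [Hk2 B2]].
  destruct (bounded_op_bound _ (BD1 t Ht)) as [kd1 [Hkd1 BD1t]].
  destruct (bounded_op_bound _ (BD2 t Ht)) as [kd2 [Hkd2 BD2t]].
  destruct (small_factor (k2 + kd2 + 2 + kd1 + k1) eps) as [eta [[Heta Heta1] Hsmall]];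
    [lra | lra |].
  destruct (C1 t Ht eta Heta) as [d1 [Hd1 E1]].
  destruct (C2 t Ht eta Heta) as [d2 [Hd2 E2]].
  destruct (op_deriv_continuous g1 D1 t Dg1 Ht (BD1 t Ht) eta Heta) as [d3 [Hd3 E3]].
  destruct (op_deriv_continuous g2 D2 t Dg2 Ht (BD2 t Ht) eta Heta) as [d4 [Hd4 E4]].
  exists (Rmin (Rmin d1 d2) (Rmin d3 d4)). split; [repeat apply Rmin_pos; assumption |].
  intros s Hs Hst.
  apply Rmin_Rgt in Hst as [Hst12 Hst34].
  apply Rmin_Rgt in Hst12 as [Hst1 Hst2]. apply Rmin_Rgt in Hst34 as [Hst3 Hst4].
  eapply op_dist_weaken.
  2: { apply op_dist_sum.
       - exact (op_dist_comp _ _ _ _ eta eta kd1 k2 (BD1 t Ht) Hkd1 BD1t B2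
                  (Rlt_le _ _ Heta) (E1 s Hs Hst1) (E4 s Hs Hst4)).
       - exact (op_dist_comp _ _ _ _ eta eta k1 kd2 (Bg1 t Ht) Hk1 B1 BD2t
                  (Rlt_le _ _ Heta) (E3 s Hs Hst3) (E2 s Hs Hst2)). }
  nra.
Qed.

End Product.
End Paths.

Lemma is_inverse_comp M1 M1i M2 M2i : is_inverse H M1 M1i -> is_inverse H M2 M2i ->
  is_inverse H (fun x => M1 (M2 x)) (fun x => M2i (M1i x)).
Proof.
  intros [B1 [L1 R1]] [B2 [L2 R2]].
  split; [apply bounded_op_comp; assumption |].
  split; intro x; [rewrite L1, L2 | rewrite R2, R1]; reflexivity.
Qed.

Lemma is_inverse_unique M Mi Mi' : is_inverse H M Mi -> is_inverse H M Mi' ->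
  forall x, Mi x = Mi' x.
Proof. intros [_ [L _]] [_ [_ R']] x. rewrite <- (R' x) at 1. apply L. Qed.

Lemma in_Sp_comp J M1 M2 : in_Sp H J M1 -> in_Sp H J M2 -> in_Sp H J (fun x => M1 (M2 x)).
Proof.
  intros [[B1 [M1i I1]] S1] [[B2 [M2i I2]] S2].
  split; [split |].
  - apply bounded_op_comp; assumption.
  - exists (fun x => M2i (M1i x)). apply is_inverse_comp; assumption.
  - intros x y. rewrite S1, S2. reflexivity.
Qed.

Lemma in_K_sum J A B : bounded_op H J -> in_K H J A -> in_K H J B ->
  in_K H J (fun x => add (A x) (B x)).
Proof.
  intros BJ [BA [SA PA]] [BB [SB PB]]. split; [| split].
  - apply bounded_op_sum; assumption.
  - intros x y. rewrite (bounded_op_vadd _ BJ), vopp_vadd, inner_add, inner_add_r, SA, SB.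
    reflexivity.
  - intros x Hx. destruct (PA x Hx) as [IA RA]. destruct (PB x Hx) as [IB RB].
    rewrite (bounded_op_vadd _ BJ), vopp_vadd, inner_add.
    unfold Cadd, Cim, Cre in *; simpl. split; lra.
Qed.

Lemma in_K_conj J M Mi A : in_Sp H J M -> is_inverse H M Mi -> in_K H J A ->
  in_K H J (fun x => M (A (Mi x))).
Proof.
  intros [[BM _] SM] [BMi [L R]] [BA [SA PA]].
  assert (SM' : forall x y, inn (opp (J (M x))) (M y) = inn (opp (J x)) y).
  { intros x y. rewrite !inner_opp_l, SM. reflexivity. }
  split; [| split].
  - apply bounded_op_comp; [| apply bounded_op_comp]; assumption.
  - intros x y. rewrite <- (R y) at 1. rewrite SM', SA, <- SM, R. reflexivity.
  - intros x Hx.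
    replace (inn (opp (J (M (A (Mi x))))) x) with (inn (opp (J (A (Mi x)))) (Mi x))
      by (rewrite <- SM', R; reflexivity).
    apply PA. intro E. apply Hx. rewrite <- (R x), E. apply (bounded_op_vzero _ BM).
Qed.

End Hilbert.

Theorem lemma2p2 (H : ComplexHilbertSpace) (J : H -> H)
  (HJb : bounded_op H J) (HJi : forall x y, J x = J y -> x = y)
  (HJs : skew_adjoint H J)
  (a b : R) (Hab : a < b) (g1 g2 : R -> H -> H) :
  positive_path H J a b g1 -> positive_path H J a b g2 ->
  positive_path H J a b (fun t x => g1 t (g2 t x)).
Proof.
  intros [D1 [[Sp1 [BD1 [Dg1 CD1]]] K1]] [D2 [[Sp2 [BD2 [Dg2 CD2]]] K2]].
  assert (Bg1 : forall t, a <= t <= b -> bounded_op H (g1 t)) by apply Sp1.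
  assert (Bg2 : forall t, a <= t <= b -> bounded_op H (g2 t)) by apply Sp2.
  exists (fun t x => vadd H (D1 t (g2 t x)) (g1 t (D2 t x))).
  split; [split; [| split; [| split]] |].
  - intros t Ht. apply in_Sp_comp; auto.
  - intros t Ht. apply bounded_op_sum; apply bounded_op_comp; auto.
  - apply op_deriv_comp; assumption.
  - apply op_continuous_deriv_comp; assumption.
  - intros t Ht Gi HGi.
    destruct (Sp1 t Ht) as [[_ [g1i Hg1i]] _]. destruct (Sp2 t Ht) as [[_ [g2i Hg2i]] _].
    replace (fun x => vadd H (D1 t (g2 t (Gi x))) (g1 t (D2 t (Gi x)))) with
      (fun x => vadd H (D1 t (g1i x)) (g1 t (D2 t (g2i (g1i x))))).
    + apply in_K_sum; [assumption | apply K1; assumption |].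
      apply (in_K_conj _ _ _ _ (fun x => D2 t (g2i x))); [apply Sp1 | | apply K2]; assumption.
    + apply functional_extensionality. intro x.
      rewrite (is_inverse_unique _ _ _ _ HGi (is_inverse_comp _ _ _ _ _ Hg1i Hg2i)).
      destruct Hg2i as [_ [_ R2]]. rewrite R2. reflexivity.
Qed.
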